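(* Let $X$ and $Y$ be Banach spaces and let $A: D(A)\subseteq X\to Y$ be a closed, (possibly nonlinear) injective map. Let $f\in\mathcal R(A)$ and let $u\in D(A)$ be the (unique) solution of $A(u)=f$. Let $\phi: D(\phi)\to[0,\infty)$ with $D(\phi)\subseteq D(A)$, $\phi(v)>0$ for $v\neq 0$, such that for every constant $c>0$ the set $\{v:\phi(v)\le c\}$ is compact in $X$, and such that $v_n\to v$ in $X$ implies $\phi(v)\le\liminf_{n\to\infty}\phi(v_n)$. Fix a constant $c>0$ with $\phi(u)\le c$. For $\delta>0$ and $f_\delta\in Y$ with $\|f_\delta-f\|\le\delta$, put $$S_\delta:=\{v:\ \|A(v)-f_\delta\|\le\delta,\ \phi(v)\le c\},\qquad F_\delta(v):=\|A(v)-f_\delta\|+\delta\,\phi(v),\qquad m(\delta):=\inf_{v\in S_\delta}F_\delta(v).$$ Let $(v_j)\subset S_\delta$ be a minimizing sequence with $F_\delta(v_j)\le 2m(\delta)$, converging in $X$ to some $v_\delta$, and define $R(\delta)f_\delta:=v_\delta$. Then $R(\delta)$ is a regularizer for the equation $A(u)=f$ in the following sense: there is a function $\eta(\delta)$ with $\eta(\delta)\to0$ as $\delta\to 0$ such that $$\sup_{v\in S_\delta}\|R(\delta)f_\delta-v\|\le\eta(\delta).$$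
   Context: $\mathcal R(A)$ denotes the range of $A$. A family of operators $R(\delta)$ is called a regularizer (in the new sense of the paper) if $\sup_{v\in S_\delta}\|R(\delta)f_\delta-v\|\le\eta(\delta)\to0$ as $\delta\to0$, where $S_\delta$ is the set of all $v$ in the a priori compact set $\{\phi\le c\}$ with $\|A(v)-f_\delta\|\le\delta$, and $f_\delta$ is any noisy datum with $\|f_\delta-f\|\le\delta$. *)

From HB Require Import structures.
From mathcomp Require Import all_boot all_order all_algebra.
From mathcomp Require Import all_classical all_reals all_analysis.
Set Implicit Arguments. Unset Strict Implicit. Unset Printing Implicit Defensive.
Import Order.TTheory GRing.Theory Num.Theory.
Import numFieldNormedType.Exports.
Local Open Scope classical_set_scope.
Local Open Scope ring_scope.

(* A (possibly nonlinear) operator A with domain DA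
   is a total function A : X -> Y together with a set DA : set X. *)

Definition closed_operator (R : realType) (X Y : normedModType R)
  (DA : set X) (A : X -> Y) : Prop :=
  closed [set p : X * Y | DA p.1 /\ p.2 = A p.1].

Definition injective_on (X Y : Type) (DA : set X) (A : X -> Y) : Prop :=
  forall x y, DA x -> DA y -> A x = A y -> x = y.

Definition seq_lsc (R : realType) (X : normedModType R)
  (Dphi : set X) (phi : X -> R) : Prop :=
  forall (vn : nat -> X) (v : X), (forall n, Dphi (vn n)) -> Dphi v ->
    vn @ \oo --> v ->
    ((phi v)%:E <= limn_einf (fun n => (phi (vn n))%:E))%E.

Definition S_delta (R : realType) (X Y : normedModType R)
  (A : X -> Y) (Dphi : set X) (phi : X -> R) (c delta : R) (fd : Y) : set X :=
  [set v | Dphi v /\ `|A v - fd| <= delta /\ phi v <= c].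

Definition F_delta (R : realType) (X Y : normedModType R)
  (A : X -> Y) (phi : X -> R) (delta : R) (fd : Y) (v : X) : R :=
  `|A v - fd| + delta * phi v.

Definition m_delta (R : realType) (X Y : normedModType R)
  (A : X -> Y) (Dphi : set X) (phi : X -> R) (c delta : R) (fd : Y) : R :=
  inf (F_delta A phi delta fd @` S_delta A Dphi phi c delta fd).

(* On the compact set K = {phi <= c} the inverse of the closed injective
   operator A is continuous at f: the closed graph turns a cluster point of a
   sequence v_n in K with A v_n -> f into a preimage of f, which is u.  Hence
   the stability modulus omega(d) = sup {|v - u| : v in K, |A v - f| <= d}
   tends to 0 with d.  Every point of S_delta has residual at most 2 delta, so
   it lies within omega(2 delta) of u, and a limit of such points lies within
   delta of one of them; eta(delta) = delta + 2 omega(2 delta) works. *)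
From HB Require Import structures.
From mathcomp Require Import all_boot all_order all_algebra.
From mathcomp Require Import all_classical all_reals all_analysis.

Set Implicit Arguments.
Unset Strict Implicit.
Unset Printing Implicit Defensive.
Import Order.TTheory GRing.Theory Num.Theory.
Import numFieldNormedType.Exports.
Local Open Scope classical_set_scope.
Local Open Scope ring_scope.

Section ClosedOperator.
Variables (R : realType) (X Y : normedModType R) (DA : set X) (A : X -> Y).
Hypothesis clA : closed_operator DA A.

Lemma closed_operator_cluster (vn : nat -> X) (p : X) (y : Y) :
  (forall n, DA (vn n)) -> A \o vn @ \oo --> y -> cluster (vn @ \oo) p ->
  DA p /\ A p = y.
Proof.
move=> Dvn Avn_y clp.
suff : closure [set q : X * Y | DA q.1 /\ q.2 = A q.1] (p, y).
  by move/clA => /= [? ->].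
move=> B /= [[P Q]] /= [nP nQ] PQB.
have [_ [[n Qn <-] Pn]] : (vn @` [set n | Q (A (vn n))]) `&` P !=set0.
  apply: (clp _ P _ nP); rewrite /= /fmap /=; near=> n; exists n => //=.
  by near: n; exact: Avn_y.
by exists (vn n, A (vn n)); split; [exact: conj (Dvn n) erefl | exact: PQB].
Unshelve. all: by end_near.
Qed.

Lemma closed_operator_image_compact (K : set X) :
  compact K -> K `<=` DA -> closed (A @` K).
Proof.
move=> cK KDA y cly.
have near_y (n : nat) : exists v, K v /\ ball y n.+1%:R^-1 (A v).
  have n1_gt0 : 0 < n.+1%:R^-1 :> R by rewrite invr_gt0 ltr0Sn.
  by have [_ [[v Kv <-] yAv]] := cly _ (nbhsx_ballx y _ n1_gt0); exists v.
have [vn vnP] := choice near_y.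
have Avn_y : A \o vn @ \oo --> y.
  apply/cvgrPdist_lt => e e0; near=> n.
  have := (vnP n).2; rewrite -ball_normE /= => /lt_trans; apply.
  by near: n; exact: (near_infty_natSinv_lt (PosNum e0)).
have [p [Kp clp]] : exists p, K p /\ cluster (vn @ \oo) p.
  by apply: cK; exists 0%N => // n _; exact: (vnP n).1.
have [_ <-] := closed_operator_cluster (fun n => KDA _ (vnP n).1) Avn_y clp.
by exists p.
Unshelve. all: by end_near.
Qed.

Lemma closed_operator_stable (K : set X) (u : X) :
  compact K -> K `<=` DA -> injective_on DA A -> DA u ->
  forall eps, 0 < eps -> exists2 d0 : R, 0 < d0 &
    forall v, K v -> `|A v - A u| < d0 -> `|v - u| < eps.
Proof.
move=> cK KDA injA Du eps eps0.
pose Kfar := K `&` ~` ball u eps.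
have farC : closed (A @` Kfar).
  apply: closed_operator_image_compact; last by move=> v [/KDA].
  by apply: compact_closedI => //; apply: open_closedC; exact: ball_open.
have : nbhs (A u) (~` (A @` Kfar)).
  apply: open_nbhs_nbhs; split; first by rewrite openC.
  move=> [v [Kv farv] Avu]; apply: farv.
  by rewrite (injA _ _ (KDA _ Kv) Du Avu); exact: ballxx.
move=> /nbhs_ballP [d0 d00 d0far]; exists d0 => // v Kv Avd0.
rewrite distrC; apply: contrapT => farv.
apply: (d0far (A v)); first by rewrite -ball_normE /= distrC.
by exists v => //; split => //; rewrite -ball_normE.
Qed.

End ClosedOperator.

Section StabilityModulus.
Variables (R : realType) (X Y : normedModType R) (K : set X) (A : X -> Y).
Variable u : X.
Hypotheses (cK : compact K) (Ku : K u).

Definition stability_modulus (d : R) : R :=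
  sup [set `|v - u| | v in [set v | K v /\ `|A v - A u| <= d]].

Lemma stability_modulus_ub (v : X) (d : R) :
  K v -> `|A v - A u| <= d -> `|v - u| <= stability_modulus d.
Proof.
move=> Kv Avd; apply: ub_le_sup; last by exists v.
have [M [_ KM]] := compact_bounded cK.
have {}KM w : K w -> `|w| <= M + 1 by move=> Kw; apply: KM => //; rewrite ltrDl.
exists ((M + 1) + (M + 1)) => _ [w [Kw _] <-].
by apply: le_trans (ler_normB _ _) _; apply: lerD; apply: KM.
Qed.

Lemma stability_modulus_le (d eps : R) : 0 <= d ->
  (forall v, K v -> `|A v - A u| <= d -> `|v - u| <= eps) ->
  stability_modulus d <= eps.
Proof.
move=> d0 Kbound; apply: ge_sup; last by move=> _ [v [Kv Avd] <-]; exact: Kbound.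
by exists `|u - u|, u => //; split; rewrite // subrr normr0.
Qed.

Lemma stability_modulus_ge0 (d : R) : 0 <= d -> 0 <= stability_modulus d.
Proof.
move=> d0; have := @stability_modulus_ub u d Ku.
by rewrite !subrr !normr0; apply.
Qed.

Lemma stability_modulus_cvg0 (DA : set X) :
  closed_operator DA A -> injective_on DA A -> K `<=` DA ->
  stability_modulus d @[d --> 0^'+] --> 0.
Proof.
move=> clA injA KDA; apply/cvgrPdist_le => eps eps0.
have [d0 d00 stable] := closed_operator_stable clA cK KDA injA (KDA _ Ku) eps0.
near=> d.
have d_gt0 : 0 < d by near: d; exact: nbhs_right_gt.
rewrite sub0r normrN ger0_norm; last exact/stability_modulus_ge0/ltW.
apply: stability_modulus_le (ltW d_gt0) _ => v Kv Avd.
apply/ltW/stable => //; apply: le_lt_trans Avd _.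
by near: d; exact: nbhs_right_lt.
Unshelve. all: by end_near.
Qed.

End StabilityModulus.

Lemma cvg_at_right0_scale (R : realType) (T : topologicalType) (g : R -> T)
  (k : R) (l : T) :
  0 < k -> g d @[d --> 0^'+] --> l -> g (k * d) @[d --> 0^'+] --> l.
Proof.
move=> k0; apply: cvg_comp => P /nbhs_ballP [e e0 eP]; rewrite /= /fmap /=.
near=> d; apply: eP; last by rewrite mulr_gt0 //; near: d; exact: nbhs_right_gt.
rewrite -ball_normE /= sub0r normrN ger0_norm; last first.
  by rewrite mulr_ge0 ?ltW //; near: d; exact: nbhs_right_gt.
rewrite -ltr_pdivlMl //; near: d; apply: nbhs_right_lt.
by rewrite mulr_gt0 ?invr_gt0.
Unshelve. all: by end_near.
Qed.

Lemma S_delta_residual (R : realType) (X Y : normedModType R) (A : X -> Y)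
  (Dphi : set X) (phi : X -> R) (c delta : R) (f fd : Y) (v : X) :
  `|fd - f| <= delta -> S_delta A Dphi phi c delta fd v ->
  `|A v - f| <= 2 * delta.
Proof.
move=> fdf [_ [Avfd _]]; rewrite -(subrK fd (A v)) -addrA mulr_natl mulr2n.
by apply: le_trans (ler_normD _ _) _; apply: lerD.
Qed.

Theorem mainTheorem1 (R : realType) (X Y : completeNormedModType R)
  (DA : set X) (A : X -> Y) (Dphi : set X) (phi : X -> R)
  (f : Y) (u : X) (c : R) :
  closed_operator DA A ->
  injective_on DA A ->
  DA u -> A u = f ->
  Dphi `<=` DA ->
  (forall v, Dphi v -> 0 <= phi v) ->
  (forall v, Dphi v -> v != 0 -> 0 < phi v) ->
  (forall c' : R, 0 < c' -> compact [set v | Dphi v /\ phi v <= c']) ->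
  seq_lsc Dphi phi ->
  0 < c -> Dphi u -> phi u <= c ->
  exists eta : R -> R,
    eta delta @[delta --> 0^'+] --> 0 /\
    forall (delta : R) (fd : Y), 0 < delta -> `|fd - f| <= delta ->
    forall (vj : nat -> X) (vd : X),
      (forall j, S_delta A Dphi phi c delta fd (vj j)) ->
      (forall j, F_delta A phi delta fd (vj j)
                   <= 2 * m_delta A Dphi phi c delta fd) ->
      (fun j => F_delta A phi delta fd (vj j)) @ \oo
        --> m_delta A Dphi phi c delta fd ->
      vj @ \oo --> vd ->
      forall v, S_delta A Dphi phi c delta fd v -> `|vd - v| <= eta delta.
Proof.
move=> clA injA _ <- DphiDA _ _ cpt _ c0 Dphiu phiu.
pose K := [set v | Dphi v /\ phi v <= c].
have cK : compact K := cpt c c0.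
have Ku : K u by [].
have KDA : K `<=` DA by move=> v [/DphiDA].
pose omega := stability_modulus K A u.
exists (fun d => d + 2 * omega (2 * d)); split.
  suff : d + 2 * omega (2 * d) @[d --> 0^'+] --> (0 + 2 * 0 : R).
    by rewrite mulr0 addr0.
  apply: cvgD; first exact: cvg_at_right_filter.
  apply: cvgM; first exact: cvg_cst.
  apply: cvg_at_right0_scale => //.
  exact: stability_modulus_cvg0 clA injA KDA.
move=> d fd d0 fdf vj vd Svj _ _ vj_vd v Sv.
have near_u w : S_delta A Dphi phi c d fd w -> `|w - u| <= omega (2 * d).
  move=> Sw; apply: stability_modulus_ub => //; first by case: Sw => ? [].
  exact: S_delta_residual Sw.
have [N _ vdN] : \forall n \near \oo, `|vd - vj n| <= d.
  by move/cvgrPdist_le : vj_vd; apply.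
apply: le_trans (ler_distD (vj N) _ _) _; apply: lerD; first by apply: vdN => /=.
apply: le_trans (ler_distD u _ _) _; rewrite mulr_natl mulr2n.
by apply: lerD; [exact: near_u (Svj N) | rewrite distrC; exact: near_u Sv].
Qed.
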